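(* Let $\gamma(s)$ be a non-geodesic arc-length parametrized curve immersed in a BCV space $M(a,b)$ with $4a\neq b^2$, with Frenet frame $\{T,N,B\}$. Then $T_3=\langle T,E_3\rangle$ is constant if and only if $N_3=\langle N,E_3\rangle=0$.
   Context: For real $a,b$, the BCV space $M(a,b)$ is $\{(x,y,z)\in\mathbb{R}^3:\lambda_a=1+a(x^2+y^2)>0\}$ with the metric $$g_{a,b}=\frac{dx^2+dy^2}{[1+a(x^2+y^2)]^2}+\left(dz+\frac{b}{2}\,\frac{y\,dx-x\,dy}{1+a(x^2+y^2)}\right)^2,$$ and $E_3=\partial_z$. The Frenet frame of a curve with nowhere vanishing curvature $\kappa=\lVert\nabla_TT\rVert$ is given by $\nabla_TT=\kappa N$, $\nabla_TN=-\kappa T+\tau B$, $\nabla_TB=-\tau N$, where $\nabla$ is the Levi-Civita connection. *)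

From Stdlib Require Import Reals.
From Coquelicot Require Import Coquelicot.
Open Scope R_scope.

(* Points / tangent vectors of R^3 in coordinates (x,y,z) = (p 0, p 1, p 2);
   only indices 0,1,2 are ever used. *)
Definition vec := nat -> R.

Definition sum3 (f : nat -> R) : R := f 0%nat + f 1%nat + f 2%nat.

Definition lam (a : R) (p : vec) : R := 1 + a * (p 0%nat ^ 2 + p 1%nat ^ 2).

(* coefficients of the 1-form  dz + (b/2)(y dx - x dy)/lambda_a *)
Definition omc (a b : R) (p : vec) (i : nat) : R :=
  match i with
  | 0%nat => b / 2 * p 1%nat / lam a p
  | 1%nat => - (b / 2 * p 0%nat / lam a p)
  | _ => 1
  end.

Definition flatc (a : R) (p : vec) (i j : nat) : R :=
  match i, j with
  | 0%nat, 0%nat => 1 / lam a p ^ 2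
  | 1%nat, 1%nat => 1 / lam a p ^ 2
  | _, _ => 0
  end.

Definition gBCV (a b : R) (p : vec) (i j : nat) : R :=
  flatc a p i j + omc a b p i * omc a b p j.

Definition ip (a b : R) (p : vec) (u v : vec) : R :=
  sum3 (fun i => sum3 (fun j => gBCV a b p i j * u i * v j)).

(* inverse metric via the (cyclic) cofactor formula for 3x3 matrices *)
Definition nxt (i : nat) : nat :=
  match i with 0%nat => 1%nat | 1%nat => 2%nat | _ => 0%nat end.

Definition cof (a b : R) (p : vec) (i j : nat) : R :=
  gBCV a b p (nxt i) (nxt j) * gBCV a b p (nxt (nxt i)) (nxt (nxt j))
  - gBCV a b p (nxt i) (nxt (nxt j)) * gBCV a b p (nxt (nxt i)) (nxt j).

Definition detg (a b : R) (p : vec) : R :=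
  sum3 (fun j => gBCV a b p 0%nat j * cof a b p 0%nat j).

Definition ginv (a b : R) (p : vec) (i j : nat) : R :=
  cof a b p j i / detg a b p.

Definition upd (p : vec) (l : nat) (t : R) : vec :=
  fun k => if Nat.eqb k l then t else p k.

Definition dg (a b : R) (p : vec) (l i j : nat) : R :=
  Derive (fun t => gBCV a b (upd p l t) i j) (p l).

Definition Gam (a b : R) (p : vec) (k i j : nat) : R :=
  sum3 (fun l => / 2 * ginv a b p k l *
                 (dg a b p i j l + dg a b p j i l - dg a b p l i j)).

Definition vel (gam : R -> vec) (s : R) : vec :=
  fun i => Derive (fun t => gam t i) s.

Definition covD (a b : R) (gam : R -> vec) (V : R -> vec) (s : R) : vec :=
  fun k => Derive (fun t => V t k) s
           + sum3 (fun i => sum3 (fun j =>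
               Gam a b (gam s) k i j * vel gam s i * V s j)).

Definition E3 : vec := fun i => match i with 2%nat => 1 | _ => 0 end.

Definition in_oint (lo hi : Rbar) (s : R) : Prop := Rbar_lt lo s /\ Rbar_lt s hi.

From Stdlib Require Import Reals Lra Lia Classical FunctionalExtensionality.
From Coquelicot Require Import Coquelicot.
Open Scope R_scope.

(* E_3 is a unit Killing field of M(a,b): the 1-form omega = g(E_3, .) =
   dz + (b/2)(y dx - x dy)/lambda_a does not depend on z, so the Christoffel
   symbols lowered against E_3 are the symmetric part of d_i omega_j, and
   d/ds <V, E_3> = <nabla_T V, E_3> + (1/2)(d_i omega_j - d_j omega_i) T^i V^j.
   For V = T the correction vanishes and the first Frenet equation gives
   T_3' = kappa N_3. As kappa > 0 on the interval, T_3 is constant there iff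
   N_3 = 0. *)

Lemma sum3_ext (f g : nat -> R) : (forall i, (i <= 2)%nat -> f i = g i) -> sum3 f = sum3 g.
Proof. intros H. unfold sum3. rewrite !H by lia. reflexivity. Qed.

Definition cofactor (g : nat -> nat -> R) (i j : nat) : R :=
  g (nxt i) (nxt j) * g (nxt (nxt i)) (nxt (nxt j))
  - g (nxt i) (nxt (nxt j)) * g (nxt (nxt i)) (nxt j).

Lemma mul_cofactor (g : nat -> nat -> R) (j l : nat) : (j <= 2)%nat -> (l <= 2)%nat ->
  sum3 (fun i => g j i * cofactor g l i)
  = if Nat.eqb j l then sum3 (fun i => g 0%nat i * cofactor g 0%nat i) else 0.
Proof.
  intros Hj Hl. unfold sum3, cofactor.
  destruct j as [|[|[|j]]]; destruct l as [|[|[|l]]]; try lia; simpl; ring.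
Qed.

Lemma gBCV_row2 a b p i : gBCV a b p 2 i = omc a b p i.
Proof. unfold gBCV, flatc. destruct i as [|[|i]]; simpl; ring. Qed.

Lemma gBCV_col2 a b p i : gBCV a b p i 2 = omc a b p i.
Proof. unfold gBCV, flatc. destruct i as [|[|i]]; simpl; ring. Qed.

Lemma gBCV_upd_z a b p t i j : gBCV a b (upd p 2 t) i j = gBCV a b p i j.
Proof. reflexivity. Qed.

Lemma ip_E3 a b p u : ip a b p u E3 = sum3 (fun k => omc a b p k * u k).
Proof. unfold ip, sum3, gBCV, flatc, E3. simpl. ring. Qed.

Lemma detg_lam a b p : lam a p <> 0 -> detg a b p = / lam a p ^ 4.
Proof. intros Hl. unfold detg, sum3, cof. simpl nxt. unfold gBCV, flatc, omc. field. auto. Qed.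

(* [omc a b p] is the last row of the metric matrix, so this is the last row
   of [g * g^-1 = 1]. *)
Lemma omc_ginv a b p l : lam a p <> 0 -> (l <= 2)%nat ->
  sum3 (fun k => omc a b p k * ginv a b p k l) = E3 l.
Proof.
  intros Hlam Hl.
  assert (Hdet : detg a b p <> 0).
  { rewrite detg_lam by exact Hlam. apply Rinv_neq_0_compat, pow_nonzero, Hlam. }
  transitivity (sum3 (fun k => gBCV a b p 2 k * cofactor (gBCV a b p) l k) / detg a b p).
  { unfold ginv, sum3. rewrite <- !gBCV_row2.
    change (cof a b p) with (cofactor (gBCV a b p)). field. exact Hdet. }
  rewrite mul_cofactor by lia.
  destruct l as [|[|[|l]]]; try lia; simpl; [lra | lra |].
  unfold Rdiv. apply Rinv_r, Hdet.
Qed.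

Lemma dg_z a b p i j : dg a b p 2 i j = 0.
Proof.
  unfold dg. rewrite (Derive_ext _ (fun _ => gBCV a b p i j)) by (intros t; apply gBCV_upd_z).
  apply Derive_const.
Qed.

Lemma omc_Gam a b p i j : lam a p <> 0 ->
  sum3 (fun k => omc a b p k * Gam a b p k i j) = (dg a b p i j 2 + dg a b p j i 2) / 2.
Proof.
  intros Hlam. unfold Gam.
  transitivity (sum3 (fun l => / 2 * (dg a b p i j l + dg a b p j i l - dg a b p l i j)
                               * sum3 (fun k => omc a b p k * ginv a b p k l))).
  { unfold sum3. ring. }
  rewrite (sum3_ext _ (fun l => / 2 * (dg a b p i j l + dg a b p j i l - dg a b p l i j) * E3 l))
    by (intros l Hl; rewrite omc_ginv by assumption; reflexivity).
  unfold sum3, E3. rewrite dg_z. field.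
Qed.

Definition basis (l : nat) : vec := fun k => if Nat.eqb k l then 1 else 0.

(* Derivatives of [lam a] and of [omc a b] at [p] in the direction [w]
   (quotient rule). *)
Definition dlam (a : R) (p w : vec) : R := 2 * a * (p 0%nat * w 0%nat + p 1%nat * w 1%nat).

Definition domc (a b : R) (p w : vec) (i : nat) : R :=
  match i with
  | 0%nat => (b / 2 * w 1%nat * lam a p - b / 2 * p 1%nat * dlam a p w) / lam a p ^ 2
  | 1%nat => - ((b / 2 * w 0%nat * lam a p - b / 2 * p 0%nat * dlam a p w) / lam a p ^ 2)
  | _ => 0
  end.

Section AlongCurve.

Variables (a b s : R) (c : R -> vec) (w : vec).
Hypotheses (Hc0 : is_derive (fun t => c t 0%nat) s (w 0%nat))
           (Hc1 : is_derive (fun t => c t 1%nat) s (w 1%nat)).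

Lemma is_derive_lam : is_derive (fun t => lam a (c t)) s (dlam a (c s) w).
Proof.
  assert (Hxy : forall x y : R -> R, is_derive x s (w 0%nat) -> is_derive y s (w 1%nat) ->
            is_derive (fun t => 1 + a * (x t ^ 2 + y t ^ 2)) s
                      (2 * a * (x s * w 0%nat + y s * w 1%nat))).
  { intros x y Hx Hy. auto_derive.
    - split; [exists (w 0%nat) | split; [exists (w 1%nat) |]]; auto.
    - change (fun t => x t) with x. change (fun t => y t) with y.
      rewrite (is_derive_unique _ _ _ Hx), (is_derive_unique _ _ _ Hy). ring. }
  exact (Hxy _ _ Hc0 Hc1).
Qed.

Lemma is_derive_omc i : lam a (c s) <> 0 ->
  is_derive (fun t => omc a b (c t) i) s (domc a b (c s) w i).
Proof.
  intros Hlam. destruct i as [|[|i]]; simpl.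
  - apply (is_derive_div (fun t => b / 2 * c t 1%nat)); auto using is_derive_lam.
    apply is_derive_scal, Hc1.
  - apply (is_derive_opp (fun t => b / 2 * c t 0%nat / lam a (c t))).
    apply (is_derive_div (fun t => b / 2 * c t 0%nat)); auto using is_derive_lam.
    apply is_derive_scal, Hc0.
  - apply (is_derive_const (V := R_NormedModule)).
Qed.

End AlongCurve.

Lemma is_derive_upd (p : vec) (l k : nat) (t : R) :
  is_derive (fun t => upd p l t k) t (basis l k).
Proof.
  unfold upd, basis. destruct (Nat.eqb k l).
  - apply (is_derive_id (K := R_AbsRing)).
  - apply (is_derive_const (V := R_NormedModule)).
Qed.

Lemma upd_same (p : vec) (l : nat) : upd p l (p l) = p.
Proof.
  apply functional_extensionality. intros k. unfold upd.
  destruct (Nat.eqb_spec k l); subst; reflexivity.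
Qed.

Lemma dg_omc a b p l i : lam a p <> 0 -> dg a b p l i 2 = domc a b p (basis l) i.
Proof.
  intros Hlam. unfold dg.
  rewrite (Derive_ext _ (fun t => omc a b (upd p l t) i)) by (intros t; apply gBCV_col2).
  apply is_derive_unique.
  rewrite <- (upd_same p l) in Hlam.
  pose proof (is_derive_omc a b (p l) (upd p l) (basis l)
                (is_derive_upd p l 0 (p l)) (is_derive_upd p l 1 (p l)) i Hlam) as H.
  rewrite upd_same in H. exact H.
Qed.

Lemma domc_linear a b p w i :
  domc a b p w i = sum3 (fun l => w l * domc a b p (basis l) i).
Proof.
  unfold sum3, domc, dlam, basis. simpl.
  destruct i as [|[|i]]; unfold Rdiv; ring.
Qed.

Lemma is_derive_omc_curve a b (gam : R -> vec) s i : lam a (gam s) <> 0 ->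
  ex_derive (fun t => gam t 0%nat) s -> ex_derive (fun t => gam t 1%nat) s ->
  is_derive (fun t => omc a b (gam t) i) s
    (sum3 (fun l => vel gam s l * dg a b (gam s) l i 2)).
Proof.
  intros Hlam H0 H1.
  rewrite (sum3_ext _ (fun l => vel gam s l * domc a b (gam s) (basis l) i))
    by (intros l _; rewrite dg_omc by exact Hlam; reflexivity).
  rewrite <- domc_linear.
  apply is_derive_omc; [apply Derive_correct, H0 | apply Derive_correct, H1 | exact Hlam].
Qed.

Lemma is_derive_sum3 (f : nat -> R -> R) (df : nat -> R) s :
  (forall i, (i <= 2)%nat -> is_derive (f i) s (df i)) ->
  is_derive (fun t => sum3 (fun i => f i t)) s (sum3 df).
Proof.
  intros H. unfold sum3.
  apply (is_derive_plus (fun t => f 0%nat t + f 1%nat t) (f 2%nat)); [|apply H; lia].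
  apply (is_derive_plus (f 0%nat) (f 1%nat)); apply H; lia.
Qed.

Lemma is_derive_ip_E3 a b (gam V : R -> vec) s :
  lam a (gam s) <> 0 ->
  ex_derive (fun t => gam t 0%nat) s -> ex_derive (fun t => gam t 1%nat) s ->
  (forall k, (k <= 2)%nat -> ex_derive (fun t => V t k) s) ->
  is_derive (fun t => ip a b (gam t) (V t) E3) s
    (ip a b (gam s) (covD a b gam V s) E3
     + sum3 (fun i => sum3 (fun j =>
         vel gam s i * V s j * (dg a b (gam s) i j 2 - dg a b (gam s) j i 2) / 2))).
Proof.
  intros Hlam H0 H1 HV.
  set (p := gam s).
  assert (Hcov : ip a b p (covD a b gam V s) E3
    = sum3 (fun k => omc a b p k * Derive (fun t => V t k) s)
      + sum3 (fun i => sum3 (fun j =>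
          vel gam s i * V s j * ((dg a b p i j 2 + dg a b p j i 2) / 2)))).
  { rewrite ip_E3. unfold covD. fold p.
    transitivity (sum3 (fun k => omc a b p k * Derive (fun t => V t k) s)
      + sum3 (fun i => sum3 (fun j =>
          vel gam s i * V s j * sum3 (fun k => omc a b p k * Gam a b p k i j)))).
    { unfold sum3. ring. }
    f_equal. apply sum3_ext; intros i _; apply sum3_ext; intros j _.
    rewrite omc_Gam by exact Hlam. reflexivity. }
  rewrite Hcov.
  replace (_ + _) with (sum3 (fun k =>
      sum3 (fun l => vel gam s l * dg a b p l k 2) * V s k
      + omc a b p k * Derive (fun t => V t k) s)) by (unfold sum3; field).
  apply is_derive_ext with (fun t => sum3 (fun k => omc a b (gam t) k * V t k)).
  { intros t. symmetry. apply ip_E3. }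
  apply is_derive_sum3. intros k Hk.
  apply (is_derive_mult (fun t => omc a b (gam t) k) (fun t => V t k)).
  - apply is_derive_omc_curve; assumption.
  - apply Derive_correct, HV, Hk.
  - intros; apply Rmult_comm.
Qed.

Lemma is_derive_T3 a b (gam T N : R -> vec) (kappa : R -> R) s :
  lam a (gam s) <> 0 ->
  ex_derive (fun t => gam t 0%nat) s -> ex_derive (fun t => gam t 1%nat) s ->
  (forall k, (k <= 2)%nat -> ex_derive (fun t => T t k) s) ->
  (forall k, T s k = vel gam s k) ->
  (forall k, (k <= 2)%nat -> covD a b gam T s k = kappa s * N s k) ->
  is_derive (fun t => ip a b (gam t) (T t) E3) s (kappa s * ip a b (gam s) (N s) E3).
Proof.
  intros Hlam H0 H1 HT Hvel Hfrenet.
  pose proof (is_derive_ip_E3 a b gam T s Hlam H0 H1 HT) as H.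
  rewrite ip_E3, (sum3_ext _ (fun k => omc a b (gam s) k * (kappa s * N s k)))
    in H by (intros k Hk; rewrite Hfrenet by exact Hk; reflexivity).
  replace (kappa s * ip a b (gam s) (N s) E3) with
    (sum3 (fun k => omc a b (gam s) k * (kappa s * N s k))
     + sum3 (fun i => sum3 (fun j =>
         vel gam s i * T s j * (dg a b (gam s) i j 2 - dg a b (gam s) j i 2) / 2)))
    by (rewrite ip_E3; unfold sum3; rewrite !Hvel; field).
  exact H.
Qed.

Lemma in_oint_between lo hi s0 s x : in_oint lo hi s0 -> in_oint lo hi s ->
  Rmin s0 s <= x <= Rmax s0 s -> in_oint lo hi x.
Proof.
  unfold in_oint, Rmin, Rmax. intros [A1 A2] [B1 B2] Hx.
  destruct (Rle_dec s0 s); destruct lo, hi; simpl in *; repeat split; lra.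
Qed.

Lemma locally_in_oint lo hi s : in_oint lo hi s -> locally s (in_oint lo hi).
Proof.
  intros [H1 H2]. apply filter_and.
  - exact (open_Rbar_gt' s lo H1).
  - exact (open_Rbar_lt' s hi H2).
Qed.

Lemma constant_on_oint_iff (f df : R -> R) lo hi :
  (forall s, in_oint lo hi s -> is_derive f s (df s)) ->
  ((exists c, forall s, in_oint lo hi s -> f s = c) <->
   (forall s, in_oint lo hi s -> df s = 0)).
Proof.
  intros Hf. split.
  - intros [c Hc] s Hs.
    apply (is_derive_unique f s (df s)) in Hf as <-; [|exact Hs].
    apply is_derive_unique, (is_derive_ext_loc (fun _ => c)).
    + apply (filter_imp (in_oint lo hi)); [|now apply locally_in_oint].
      intros t Ht. symmetry. now apply Hc.
    + apply (is_derive_const (V := R_NormedModule)).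
  - intros Hdf.
    destruct (classic (exists s0, in_oint lo hi s0)) as [[s0 Hs0] | Hempty].
    + exists (f s0). intros s Hs.
      destruct (MVT_gen f s0 s df) as [x [Hx Hmvt]].
      * intros x Hx. apply Hf. apply (in_oint_between lo hi s0 s); auto; lra.
      * intros x Hx. apply continuity_pt_filterlim.
        apply (ex_derive_continuous (K := R_AbsRing) (V := R_NormedModule)).
        exists (df x). apply Hf, (in_oint_between lo hi s0 s); auto.
      * rewrite Hdf in Hmvt by (apply (in_oint_between lo hi s0 s); auto). lra.
    + exists 0. intros s Hs. exfalso. apply Hempty. now exists s.
Qed.

Theorem lemma4p7 (a b : R) (lo hi : Rbar) (gam T N B : R -> vec) (kappa tau : R -> R) :
  4 * a <> b ^ 2 ->
  Rbar_lt lo hi ->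
  (* the curve lies in M(a,b) and is (componentwise) differentiable, with
     differentiable Frenet fields *)
  (forall s, in_oint lo hi s -> 0 < lam a (gam s)) ->
  (forall s i, in_oint lo hi s -> (i <= 2)%nat ->
     ex_derive (fun t => gam t i) s /\ ex_derive (fun t => T t i) s /\
     ex_derive (fun t => N t i) s /\ ex_derive (fun t => B t i) s) ->
  (* T is the unit tangent (arc-length parametrization) *)
  (forall s i, in_oint lo hi s -> T s i = vel gam s i) ->
  (* {T,N,B} is orthonormal *)
  (forall s, in_oint lo hi s ->
     ip a b (gam s) (T s) (T s) = 1 /\ ip a b (gam s) (N s) (N s) = 1 /\
     ip a b (gam s) (B s) (B s) = 1 /\ ip a b (gam s) (T s) (N s) = 0 /\
     ip a b (gam s) (T s) (B s) = 0 /\ ip a b (gam s) (N s) (B s) = 0) ->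
  (* nowhere vanishing curvature (non-geodesic) *)
  (forall s, in_oint lo hi s -> 0 < kappa s) ->
  (* Frenet equations *)
  (forall s k, in_oint lo hi s -> (k <= 2)%nat ->
     covD a b gam T s k = kappa s * N s k /\
     covD a b gam N s k = - kappa s * T s k + tau s * B s k /\
     covD a b gam B s k = - tau s * N s k) ->
  ((exists c, forall s, in_oint lo hi s -> ip a b (gam s) (T s) E3 = c) <->
   (forall s, in_oint lo hi s -> ip a b (gam s) (N s) E3 = 0)).
Proof.
  intros _ _ Hlam Hder Hvel _ Hkappa Hfrenet.
  assert (HT3 : forall s, in_oint lo hi s ->
    is_derive (fun t => ip a b (gam t) (T t) E3) s (kappa s * ip a b (gam s) (N s) E3)).
  { intros s Hs. apply is_derive_T3.
    - apply Rgt_not_eq, Hlam, Hs.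
    - apply (Hder s 0%nat Hs); lia.
    - apply (Hder s 1%nat Hs); lia.
    - intros k Hk. apply (Hder s k Hs Hk).
    - intros k. apply Hvel, Hs.
    - intros k Hk. apply (Hfrenet s k Hs Hk). }
  rewrite (constant_on_oint_iff _ _ lo hi HT3).
  split; intros H s Hs.
  - pose proof (Hkappa s Hs).
    destruct (Rmult_integral _ _ (H s Hs)); [lra | assumption].
  - rewrite (H s Hs). apply Rmult_0_r.
Qed.
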